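(* Let $q$ be a positive multiple of $24$. Then for every $m\in\mathbb{Z}$ with $q\nmid 24m$, one has $|\widehat{f_q}(-m)|\le\frac1{\sqrt5}$.
   Context: $e(\theta):=e^{2\pi i\theta}$. For $f:\mathbb{Z}/q\mathbb{Z}\to\mathbb{C}$, $\widehat f(r):=\frac1q\sum_{x\in\mathbb{Z}/q\mathbb{Z}}f(x)e(-rx/q)$, and $f_q(t):=\#\{x\in\mathbb{Z}/q\mathbb{Z}:x^2=t\}$. *)

From HB Require Import structures.
From mathcomp Require Import all_boot all_order all_algebra.
From mathcomp Require Import complex.
From mathcomp Require Import reals trigo.
Set Implicit Arguments. Unset Strict Implicit. Unset Printing Implicit Defensive.
Import Order.TTheory GRing.Theory Num.Theory.
Local Open Scope ring_scope.
Local Open Scope complex_scope.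

(* e(theta) := exp(2 pi i theta) = cos(2 pi theta) + i sin(2 pi theta) *)
Definition ee (R : realType) (theta : R) : R[i] :=
  (cos (2 * pi * theta)) +i* (sin (2 * pi * theta)).

(* Fourier transform on Z/qZ (q >= 2, elements of 'Z_q represented by 0..q-1):
   hat f(r) = 1/q sum_x f(x) e(-r x / q). *)
Definition fourier (R : realType) (q : nat) (f : 'Z_q -> R[i]) (r : int) : R[i] :=
  (q%:R)^-1 * \sum_(x : 'Z_q) f x * ee (- ((r%:~R * (val x)%:R) / q%:R) : R).

Definition fq (q : nat) (t : 'Z_q) : nat := #|[set x : 'Z_q | x * x == t]|.

From HB Require Import structures.
From mathcomp Require Import all_boot all_order all_algebra.
From mathcomp Require Import complex.
From mathcomp Require Import reals trigo.
From mathcomp Require Import lra ring.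
Import Order.TTheory GRing.Theory Num.Theory.
Local Open Scope ring_scope.

(* Up to the factor 1/q, the transform is the quadratic Gauss sum
   G = sum_y e(m y^2 / q).  Expanding |G|^2 and substituting y -> y + h turns
   the inner sum into a complete character sum over y of e(2 m h y / q), so
   |G|^2 <= q #{h : q | 2 m h} <= q gcd(q, 2m).  As q does not divide
   24 m = 12 (2m), the index q / gcd(q, 2m) does not divide 12, hence is at
   least 5, and |G|^2 <= q^2 / 5. *)

Section Exponential.
Variable R : realType.
Implicit Types a b : R.

Lemma eeD a b : ee (a + b) = ee a * ee b.
Proof.
rewrite /ee mulrDr cosD sinD.
by apply/eqP; rewrite eq_complex /=; apply/andP; split; apply/eqP; lra.
Qed.

Lemma ee0 : ee (0 : R) = 1.
Proof. by rewrite /ee mulr0 cos0 sin0. Qed.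

Lemma eeN a : ee (- a) = (ee a)^*.
Proof. by rewrite /ee mulrN cosN sinN. Qed.

Lemma ee_nat (n : nat) : ee (n%:R : R) = 1.
Proof.
elim: n => [|n IHn]; first exact: ee0.
by rewrite -natr1 eeD IHn /ee mulr1 mulr_natl cos2pi sin2pi mul1r.
Qed.

Lemma ee_int (n : int) : ee (n%:~R : R) = 1.
Proof.
by case: n => n; rewrite ?NegzE ?rmorphN /= ?eeN -?pmulrn ee_nat ?conjC1.
Qed.

Lemma norm_ee a : `|ee a| = 1.
Proof.
apply/eqP; rewrite -(@eqrXn2 _ 2) ?normr_ge0 // normCK expr1n.
by apply/eqP; rewrite -eeN -eeD subrr ee0.
Qed.

Lemma ee_neq1 a : 0 < a < 1 -> ee a != 1.
Proof.
move=> /andP[a_gt0 a_lt1]; apply/eqP => ea1.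
have sin_pos : 0 < sin (2 * pi * (a / 2)).
  have -> : 2 * pi * (a / 2) = pi * a by field.
  apply: sin_gt0_pi; rewrite mulr_gt0 ?pi_gt0 //=.
  by rewrite -{2}[pi]mulr1 ltr_pM2l ?pi_gt0.
have : ee (a / 2) ^+ 2 == 1 by rewrite expr2 -eeD -splitr ea1.
rewrite sqrf_eq1 => /orP[] /eqP/(congr1 (@complex.Im R)) /= sin0;
  by move: sin_pos; rewrite sin0 ?oppr0 ltxx.
Qed.

End Exponential.

Section UnitRoots.
Variables (R : realType) (q : nat).
(* ['Z_q] is Z/max(q,2)Z, so it only models Z/qZ for [1 < q]. *)
Hypothesis q_gt1 : (1 < q)%N.

Definition zeta (n : int) : R[i] := ee (n%:~R / q%:R).

Lemma zetaD m n : zeta (m + n) = zeta m * zeta n.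
Proof. by rewrite /zeta rmorphD /= mulrDl eeD. Qed.

Lemma zeta_mulq k : zeta (q%:Z * k) = 1.
Proof.
rewrite /zeta rmorphM /= -[(q%:Z)%:~R]/(q%:R : R) mulrAC divff ?mul1r ?ee_int //.
by rewrite pnatr_eq0 -lt0n ltnW.
Qed.

Lemma zeta_mulmodz m n : zeta (m * (n %% q)%Z) = zeta (m * n).
Proof.
have -> : m * n = q%:Z * (m * (n %/ q)%Z) + m * (n %% q)%Z.
  by rewrite {1}(divz_eq n q); ring.
by rewrite zetaD zeta_mulq mul1r.
Qed.

Lemma zeta_eq1 n : (zeta n == 1) = (q%:Z %| n)%Z.
Proof.
apply/idP/idP => [/eqP zn1|/dvdzP[k ->]]; last by rewrite mulrC zeta_mulq.
have q_gt0 : (0 < q)%N by apply: ltnW.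
have zr1 : zeta (n %% q)%Z = 1 by rewrite -[(n %% q)%Z]mul1r zeta_mulmodz mul1r.
apply/dvdz_mod0P/eqP; apply: contraT => r_neq0.
suff : zeta (n %% q)%Z != 1 by rewrite zr1 eqxx.
have qR_gt0 : (0 : R) < q%:R by rewrite ltr0n.
apply/ee_neq1/andP; split.
  by rewrite divr_gt0 // ltr0z lt_neqAle eq_sym r_neq0 modz_ge0 // eqz_nat -lt0n.
by rewrite ltr_pdivrMr // mul1r -[q%:R]/((q%:Z)%:~R : R) ltr_int; apply: ltz_pmod.
Qed.

Definition psi (m : int) (x : 'Z_q) : R[i] := zeta (m * (val x)%:Z).

Lemma psiD m : {morph psi m : x y / x + y >-> x * y}.
Proof.
move=> x y; rewrite /psi /= {3}(Zp_cast q_gt1) -modz_nat zeta_mulmodz.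
by rewrite PoszD mulrDr zetaD.
Qed.

Lemma psi0 m : psi m 0 = 1.
Proof. by rewrite /psi mulr0 /zeta mul0r ee0. Qed.

Lemma psiMn m x n : psi m (x *+ n) = psi m x ^+ n.
Proof. by elim: n => [|n IHn]; rewrite ?psi0 // mulrS psiD IHn exprS. Qed.

Lemma norm_psi m x : `|psi m x| = 1.
Proof. exact: norm_ee. Qed.

Lemma psiN m x : psi m (- x) = (psi m x)^*.
Proof.
have psi_neq0 : psi m x != 0 by rewrite -normr_eq0 norm_psi oner_eq0.
apply: (mulfI psi_neq0); rewrite -psiD subrr psi0.
by rewrite -normCK norm_psi expr1n.
Qed.

Lemma sum_psi_mul m c :
  \sum_(y : 'Z_q) psi m (y * c) = if psi m c == 1 then q%:R else 0.
Proof.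
have -> : \sum_(y : 'Z_q) psi m (y * c) = \sum_(i < (Zp_trunc q).+2) psi m c ^+ i.
  by apply: eq_bigr => y _; rewrite -{1}(natr_Zp y) mulr_natl psiMn.
case: eqP => [->|psi_neq1].
  rewrite (eq_bigr (fun=> 1)) ?sumr_const ?card_ord ?(Zp_cast q_gt1) // => i _.
  by rewrite expr1n.
have q_eq0 : ((Zp_trunc q).+2%:R : 'Z_q) = 0 by apply: val_inj; rewrite Zp_nat /= modnn.
have : (psi m c - 1) * \sum_(i < (Zp_trunc q).+2) psi m c ^+ i = 0.
  by rewrite -subrX1 -psiMn -mulr_natr q_eq0 mulr0 psi0 subrr.
by move/eqP; rewrite mulf_eq0 subr_eq0 => /orP[/eqP|/eqP].
Qed.

End UnitRoots.

Section GcdCounting.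
Local Open Scope nat_scope.

(* With t = q / gcd(q, k), q | k h forces t | h, so h |-> h / t is injective
   into 'I_gcd(q, k). *)
Lemma card_Zp_dvdn_mul (q k : nat) : 1 < q ->
  #|[set h : 'Z_q | q %| k * val h]| <= gcdn q k.
Proof.
move=> q_gt1; have q_gt0 : 0 < q by apply: ltnW.
set g := gcdn q k; set t := q %/ g.
have g_gt0 : 0 < g by rewrite gcdn_gt0 q_gt0.
have q_eq : t * g = q by rewrite divnK // dvdn_gcdl.
have t_gt0 : 0 < t by move: q_eq q_gt0; case: (t) => // <-.
have t_dvd (h : 'Z_q) : q %| k * val h -> t %| val h.
  move=> q_dvd; have : q %| gcdn (k * val h) (q * val h).
    by rewrite dvdn_gcd q_dvd dvdn_mulr.
  by rewrite -muln_gcdl gcdnC -/g -{1}q_eq [g * _]mulnC dvdn_pmul2r.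
move: g_gt0; case Eg: g => [//|g'] _.
pose f (h : 'Z_q) : 'I_g'.+1 := inord (val h %/ t).
have f_lt (h : 'Z_q) : val h %/ t < g'.+1.
  by rewrite -Eg ltn_divLR // mulnC q_eq -[X in _ < X](Zp_cast q_gt1) ltn_ord.
rewrite -[g'.+1]card_ord; apply: (@leq_card_in _ _ f) => h1 h2.
rewrite !inE => /t_dvd h1_dvd /t_dvd h2_dvd /(congr1 (@nat_of_ord _)).
rewrite /f !inordK // => eq_div.
by apply: val_inj; rewrite -(divnK h1_dvd) -(divnK h2_dvd) eq_div.
Qed.

(* Every positive integer below 5 divides 12. *)
Lemma gcdn_le_fifth (q k : nat) : 0 < q -> ~~ (q %| 12 * k) -> 5 * gcdn q k <= q.
Proof.
move=> q_gt0 q_ndvd; set g := gcdn q k; set t := q %/ g.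
have q_eq : t * g = q by rewrite divnK // dvdn_gcdl.
rewrite -[X in _ <= X]q_eq leq_mul2r leqNgt; apply/orP; right; apply/negP => t_lt5.
have t_dvd12 : t %| 12.
  have t_gt0 : 0 < t by move: q_eq q_gt0; case: (t) => // <-.
  by move: t_gt0 t_lt5; case: (t) => [|[|[|[|[|]]]]].
by move: q_ndvd; rewrite -q_eq dvdn_mul // dvdn_gcdr.
Qed.

End GcdCounting.

Section GaussSum.
Variables (R : realType) (q : nat) (m : int).
Hypothesis q_gt1 : (1 < q)%N.
Local Notation psi := (@psi R q m).

Definition gauss_sum : R[i] := \sum_(y : 'Z_q) psi (y * y).

Lemma gauss_sum_mul_conj : gauss_sum * gauss_sum^* =
  \sum_(h : 'Z_q) psi (h * h) * (if psi (h + h) == 1 then q%:R else 0).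
Proof.
have -> : gauss_sum^* = \sum_(y : 'Z_q) psi (- (y * y)).
  by rewrite rmorph_sum; apply: eq_bigr => y _; rewrite psiN.
rewrite mulr_sumr (eq_bigr (fun x => \sum_(h : 'Z_q) psi (h * h) * psi (x * (h + h)))).
  by rewrite exchange_big; apply: eq_bigr => h _; rewrite -mulr_sumr sum_psi_mul.
move=> x _; rewrite mulr_suml (reindex_inj (addrI x)); apply: eq_bigr => h _.
by rewrite -!psiD //; congr psi; ring.
Qed.

Lemma norm_gauss_sum2_le : `|gauss_sum| ^+ 2 <= (q * #|[set h : 'Z_q | psi (h + h) == 1]|)%:R.
Proof.
rewrite -[leLHS]ger0_norm ?exprn_ge0 // normCK gauss_sum_mul_conj.
apply: le_trans (ler_norm_sum _ _ _) _.
rewrite natrM -sumr_const mulr_sumr [leRHS]big_mkcond /=.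
apply: ler_sum => h _; rewrite normrM norm_psi mul1r inE mulr1.
by case: ifP => _; rewrite ?normr_nat ?normr0.
Qed.

Lemma psi_double_eq1 h : (psi (h + h) == 1) = (q %| `|(2 * m)%R| * val h)%N.
Proof.
rewrite psiD // /psi -zetaD zeta_eq1 //.
have -> : m * (val h)%:Z + m * (val h)%:Z = (2 * m) * (val h)%:Z by ring.
by rewrite dvdzE abszM.
Qed.

Lemma norm_gauss_sum2_le_gcdn : `|gauss_sum| ^+ 2 <= (q * gcdn q `|(2 * m)%R|)%:R.
Proof.
apply: le_trans norm_gauss_sum2_le _; rewrite ler_nat leq_mul2l.
apply/orP; right; apply: (leq_trans _ (card_Zp_dvdn_mul _ _ q_gt1)); apply: subset_leq_card.
by apply/subsetP => h; rewrite !inE psi_double_eq1.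
Qed.

End GaussSum.

Local Open Scope complex_scope.

Lemma fourier_fq (R : realType) (q : nat) (m : int) : (1 < q)%N ->
  fourier (fun t : 'Z_q => ((fq t)%:R : R[i])) (- m) = q%:R^-1 * gauss_sum R q m.
Proof.
move=> q_gt1; rewrite /fourier /gauss_sum; congr (_ * _).
rewrite [RHS](partition_big (fun y : 'Z_q => y * y) xpredT) //=; apply: eq_bigr => t _.
rewrite (eq_bigr (fun=> psi R q m t)); last by move=> y /eqP ->.
rewrite (eq_bigl (fun y => y \in [set y : 'Z_q | y * y == t])); last by move=> y; rewrite inE.
by rewrite sumr_const -[RHS]mulr_natl /fq /psi /zeta intrM rmorphN /= !mulNr opprK.
Qed.

Lemma norm_le_inv_sqrt5 (R : realType) (z : R[i]) :
  5 * `|z| ^+ 2 <= 1 -> `|z| <= ((Num.sqrt (5 : R))^-1)%:C.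
Proof.
move=> z_le; rewrite -(@ler_pXn2r _ 2) ?nnegrE ?normr_ge0 ?ler0c ?invr_ge0 ?sqrtr_ge0 //.
rewrite -[leRHS]rmorphXn /= exprVn sqr_sqrtr ?ler0n // fmorphV /= rmorph_nat.
by rewrite -div1r ler_pdivlMr ?ltr0n // mulrC.
Qed.

Theorem lemma3p4 (R : realType) (q : nat) (hq : (0 < q)%N) (h24 : (24 %| q)%N)
  (m : int) (hm : ~~ (q%:Z %| 24 * m)%Z) :
  `| fourier (fun t : 'Z_q => ((fq t)%:R : R[i])) (- m) | <= ((Num.sqrt (5 : R))^-1)%:C.
Proof.
(* [24 %| q] is only needed here, to rule out q = 1. *)
have q_gt1 : (1 < q)%N by apply: leq_trans (dvdn_leq hq h24).
have q_ndvd : ~~ (q %| 12 * `|(2 * m)%R|)%N by move: hm; rewrite dvdzE !abszM mulnA.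
rewrite fourier_fq //; apply: norm_le_inv_sqrt5.
rewrite normrM normfV normr_nat exprMn exprVn mulrCA ler_pdivrMl ?exprn_gt0 ?ltr0n // mulr1.
apply: le_trans (ler_wpM2l _ (norm_gauss_sum2_le_gcdn R q m q_gt1)) _; first exact: ler0n.
by rewrite -natrM -natrX ler_nat mulnCA expnS expn1 leq_mul2l gcdn_le_fifth ?orbT.
Qed.
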